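(* Let $\Sigma$ be a graded alphabet, $L$ a finite tree language over $\Sigma$, and $A_L=(\Sigma,Q,\nu,\delta)$ the sequential subtree automaton of $L$. Then for every tree $r\in\mathrm{SubTreeSet}(L)$, $\Delta(r)=\{r\}$.
   Context: A graded alphabet is a finite set $\Sigma=\bigcup_{k\in\mathbb{N}}\Sigma_k$; $T_\Sigma$ is the set of trees $f(t_1,\ldots,t_k)$ with $f\in\Sigma_k$. A RWTA is $A=(\Sigma,Q,\nu,\delta)$ with $Q$ finite, $\nu:Q\to\mathbb{N}$, $\delta\subseteq\bigcup_k Q\times\Sigma_k\times Q^k$; $\delta(f,q_1,\ldots,q_k)=\{q\mid(q,f,q_1,\ldots,q_k)\in\delta\}$, extended to subsets by union over tuples; $\Delta(f(t_1,\ldots,t_k))=\delta(f,\Delta(t_1),\ldots,\Delta(t_k))$. For $t=f(t_1,\ldots,t_k)$, $\mathrm{SubTree}(t)=\{t\}\cup\bigcup_j\mathrm{SubTree}(t_j)$; $\mathrm{SubTreeSet}(L)=\bigcup_{t\in L}\mathrm{SubTree}(t)$; $\mathrm{SubTreeSeries}_t(s)$ is the number of nodes of $t$ whose subtree equals $s$ and $\mathrm{SubTreeSeries}_L=\sum_{t\in L}\mathrm{SubTreeSeries}_t$. The sequential subtree automaton of $L$ is $A_L=(\Sigma,Q,\nu,\delta)$ with $Q=\mathrm{SubTreeSet}(L)$, $\nu(t')=\mathrm{SubTreeSeries}_L(t')$, and for $f\in\Sigma_k$ and $t_1,\ldots,t_{k+1}\in Q$: $t_{k+1}\in\delta(f,t_1,\ldots,t_k)$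 iff $t_{k+1}=f(t_1,\ldots,t_k)$. *)

From HB Require Import structures.
From mathcomp Require Import all_boot.
Set Implicit Arguments. Unset Strict Implicit. Unset Printing Implicit Defensive.

(* A graded alphabet: a finite type of symbols Sigma with an arity (rank)
   function; Sigma_k = [pred f | arity f == k]. *)
Section Trees.
Variable Sigma : finType.

Inductive tree : Type := Node of Sigma & seq tree.

Fixpoint enc (t : tree) : GenTree.tree Sigma :=
  match t with Node f ts => GenTree.Node 0 (GenTree.Leaf f :: map enc ts) end.

Fixpoint dec (t : GenTree.tree Sigma) : option tree :=
  match t with
  | GenTree.Node _ (GenTree.Leaf f :: ts) => Some (Node f (pmap dec ts))
  | _ => None
  end.

Lemma encK : pcancel enc dec.
Proof.
rewrite /pcancel; fix IH 1; case=> f ts /=; congr (Some (Node f _)).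
elim: ts => [|t ts IHts] //=; by rewrite IH IHts.
Qed.

HB.instance Definition _ := Countable.copy tree (pcan_type encK).

Fixpoint children_ok (ar : Sigma -> nat) (t : tree) : bool :=
  match t with Node f ts => (size ts == ar f) && all (children_ok ar) ts end.

Definition wf_tree (ar : Sigma -> nat) (t : tree) := children_ok ar t.

Fixpoint subtrees (t : tree) : seq tree :=
  match t with Node f ts => t :: flatten (map subtrees ts) end.

Definition SubTreeSet (L : seq tree) : seq tree :=
  undup (flatten (map subtrees L)).

Definition SubTreeSeries_t (t s : tree) : nat := count_mem s (subtrees t).
Definition SubTreeSeries (L : seq tree) (s : tree) : nat :=
  \sum_(t <- L) SubTreeSeries_t t s.

(* RWTA over Sigma: finite state set, weight nu, transition relation
   delta q f [q_1;..;q_k] meaning (q,f,q_1,..,q_k) in delta. *)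
Record RWTA := {
  state : finType;
  nu : state -> nat;
  delta : state -> Sigma -> seq state -> Prop }.

Fixpoint Delta (A : RWTA) (t : tree) {struct t} : state A -> Prop :=
  match t with
  | Node f ts => fun q =>
      exists qs : seq (state A), @delta A q f qs /\
        (fix all2D (ts : seq tree) (qs : seq (state A)) {struct ts} : Prop :=
           match ts, qs with
           | [::], [::] => True
           | t :: ts', q :: qs' => @Delta A t q /\ all2D ts' qs'
           | _, _ => False
           end) ts qs
  end.

Definition subtree_automaton (ar : Sigma -> nat) (L : seq tree) : RWTA :=
  {| state := seq_sub (SubTreeSet L);
     nu := fun q => SubTreeSeries L (ssval q);
     delta := fun q f qs =>
       size qs = ar f /\ ssval q = Node f (map (@ssval _ _) qs) |}.

End Trees.

From HB Require Import structures.
From mathcomp Require Import all_boot.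

(* A run of the subtree automaton can only label a tree [t] with the state [t]
   itself, since the transitions just rebuild the tree from its children.
   Conversely, [SubTreeSet L] is closed under taking subtrees and its members
   respect the arities, so every child of a state is again a state and the
   identity labelling is a run. *)

Set Implicit Arguments.
Unset Strict Implicit.
Unset Printing Implicit Defensive.

Section TreeInduction.
Variable Sigma : finType.

Lemma tree_ind_in (P : tree Sigma -> Prop) :
  (forall f ts, (forall t, t \in ts -> P t) -> P (Node f ts)) -> forall t, P t.
Proof.
move=> IH; fix IHt 1; case=> f ts; apply: IH; move: ts.
fix IHts 1; case=> [|u us] t.
- (* [by] would close this goal with [IHt t], which the guard checker rejects. *)
  rewrite in_nil => nil_t; discriminate nil_t.
- rewrite inE => /predU1P [-> | tus]; [exact: IHt | exact: IHts tus].
Qed.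

End TreeInduction.

Section All2P.
Variables (A B : Type) (P : A -> B -> Prop).

Fixpoint all2P (s : seq A) (t : seq B) : Prop :=
  match s, t with
  | [::], [::] => True
  | x :: s', y :: t' => P x y /\ all2P s' t'
  | _, _ => False
  end.

End All2P.

Lemma all2P_map_eq (A : eqType) (B : Type) (P : A -> B -> Prop) (g : B -> A) s t :
  (forall x, x \in s -> forall y, P x y -> g y = x) ->
  all2P P s t -> map g t = s.
Proof.
elim: s t => [|x s IHs] [|y t] //= Hg [Pxy Pst].
rewrite (Hg x (mem_head x s) y Pxy) IHs // => z zs; apply: Hg.
by rewrite inE zs orbT.
Qed.

Lemma all2P_lift (A : eqType) (B : Type) (P : A -> B -> Prop) (g : B -> A) s :
  (forall x, x \in s -> exists2 y, g y = x & P x y) ->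
  exists2 t, map g t = s & all2P P s t.
Proof.
elim: s => [|x s IHs] Hs; first by exists [::].
have [y gy Pxy] := Hs x (mem_head x s).
have [|t gt Pst] := IHs; first by move=> z zs; apply: Hs; rewrite inE zs orbT.
by exists (y :: t); rewrite /= ?gy ?gt.
Qed.

Section Subtrees.
Variable Sigma : finType.
Implicit Types (s t u : tree Sigma) (ts : seq (tree Sigma)).

Lemma mem_subtrees_Node u f ts :
  (u \in subtrees (Node f ts)) = (u == Node f ts) || has (fun t => u \in subtrees t) ts.
Proof.
rewrite /= inE; congr orb; apply/flattenP/hasP => [[_ /mapP [t tts ->]] | [t tts]].
  by exists t.
by exists (subtrees t); first exact: map_f.
Qed.

Lemma subtrees_refl t : t \in subtrees t.
Proof. by case: t => f ts; rewrite mem_subtrees_Node eqxx. Qed.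

Lemma subtrees_trans s t u : s \in subtrees t -> u \in subtrees s -> u \in subtrees t.
Proof.
elim/tree_ind_in: t => f ts IH; rewrite mem_subtrees_Node.
case/predU1P => [-> // | /hasP [t tts st]] us.
by rewrite mem_subtrees_Node; apply/orP; right; apply/hasP; exists t; last exact: IH us.
Qed.

Lemma child_subtrees t f ts : t \in ts -> t \in subtrees (Node f ts).
Proof.
by move=> tts; rewrite mem_subtrees_Node; apply/orP; right; apply/hasP; exists t;
  last exact: subtrees_refl.
Qed.

Lemma children_ok_subtrees (ar : Sigma -> nat) s t :
  children_ok ar t -> s \in subtrees t -> children_ok ar s.
Proof.
elim/tree_ind_in: t => f ts IH ok_fts.
rewrite mem_subtrees_Node => /predU1P [-> // | /hasP [t tts st]].
by case/andP: ok_fts => _ /allP ok_ts; exact: IH t tts (ok_ts t tts) st.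
Qed.

Lemma SubTreeSetP L s :
  reflect (exists2 t, t \in L & s \in subtrees t) (s \in SubTreeSet L).
Proof.
rewrite mem_undup; apply: (iffP flattenP) => [[_ /mapP [t tL ->]] | [t tL]].
  by exists t.
by exists (subtrees t); first exact: map_f.
Qed.

Lemma SubTreeSet_subtrees L s u :
  s \in SubTreeSet L -> u \in subtrees s -> u \in SubTreeSet L.
Proof.
by case/SubTreeSetP=> t tL st us; apply/SubTreeSetP; exists t; last exact: subtrees_trans us.
Qed.

Lemma SubTreeSet_wf (ar : Sigma -> nat) L s :
  all (wf_tree ar) L -> s \in SubTreeSet L -> children_ok ar s.
Proof.
by move=> /allP wfL /SubTreeSetP [t tL st]; apply: children_ok_subtrees st; apply: wfL.
Qed.

End Subtrees.

Lemma DeltaE (Sigma : finType) (B : RWTA Sigma) f ts q :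
  Delta (Node f ts) q <-> exists2 qs, delta q f qs & all2P (@Delta _ B) ts qs.
Proof. by split=> [[qs [dq run]] | [qs dq run]]; exists qs. Qed.

Section SubtreeAutomaton.
Variables (Sigma : finType) (ar : Sigma -> nat) (L : seq (tree Sigma)).
Let A := subtree_automaton ar L.

Lemma Delta_subtree_automaton_val t (q : state A) : Delta t q -> ssval q = t.
Proof.
elim/tree_ind_in: t q => f ts IH q /DeltaE [qs [_ ->] run].
by rewrite (all2P_map_eq IH run).
Qed.

Lemma Delta_subtree_automaton_self (HL : all (wf_tree ar) L) t (q : state A) :
  t \in SubTreeSet L -> ssval q = t -> Delta t q.
Proof.
elim/tree_ind_in: t q => f ts IH q tL qt; apply/DeltaE.
have tsL x : x \in ts -> x \in SubTreeSet L.
  by move=> xts; apply: SubTreeSet_subtrees tL (child_subtrees f xts).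
have [|qs qsts run] := @all2P_lift _ _ (@Delta _ A) (@ssval _ _) ts.
  by move=> x xts; exists (SeqSub (tsL x xts)) => //; apply: IH => //; apply: tsL.
exists qs => //; split; last by rewrite qt qsts.
by have /andP [/eqP <- _] := SubTreeSet_wf HL tL; rewrite -qsts size_map.
Qed.

End SubtreeAutomaton.

Theorem lemma9 (Sigma : finType) (ar : Sigma -> nat) (L : seq (tree Sigma))
  (HL : all (wf_tree ar) L) (r : tree Sigma) (Hr : r \in SubTreeSet L) :
  forall q : state (subtree_automaton ar L),
    @Delta Sigma (subtree_automaton ar L) r q <-> ssval q = r.
Proof.
move=> q; split; first exact: Delta_subtree_automaton_val.
exact: Delta_subtree_automaton_self.
Qed.
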